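(* For any non-hierarchical query $Q$, $\mathsf{w}(\widehat Q)\ge\frac32$, where $\widehat Q$ is the multivariate extension of $Q$.
   Context: A query is a full conjunctive query $Q = R_1(\mathbf X_1)\wedge\cdots\wedge R_k(\mathbf X_k)$. For a variable $X$, $\mathrm{at}(X)$ is the set of atoms containing $X$; $Q$ is hierarchical if for any two variables $X,Y$, either $\mathrm{at}(X)\subseteq\mathrm{at}(Y)$, $\mathrm{at}(Y)\subseteq\mathrm{at}(X)$, or $\mathrm{at}(X)\cap\mathrm{at}(Y)=\emptyset$. Multivariate extension: take fresh variables $Z_1,\dots,Z_k$. For a permutation $\sigma$ of $[k]$, the component $\widehat Q_\sigma$ replaces each atom $R_{\sigma_i}(\mathbf X_{\sigma_i})$ by $\widehat R_{\sigma_i}(Z_1,\dots,Z_i,\mathbf X_{\sigma_i})$; $\widehat Q$ is the union of all components. Fractional hypertree width $\mathsf{w}(P)$ of a query $P$: minimum over tree decompositions of $P$ (trees with bags of variables covering every atom schema, the bags containing any variable forming a connected subtree) of the maximum over bags $B$ of the fractional edge cover number of $P$ restricted to $B$ (each atom schema intersected with $B$). For a union of queries, $\mathsf{w}$ is the maximum over the queries. *)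

From HB Require Import structures.
From mathcomp Require Import all_boot all_order all_algebra all_fingroup.
From mathcomp Require Import classical_sets reals constructive_ereal ereal.
Set Implicit Arguments. Unset Strict Implicit. Unset Printing Implicit Defensive.
Import Order.TTheory GRing.Theory Num.Theory.
Local Open Scope ring_scope.

(* A (full conjunctive) query with k atoms over the finite variable type V is
   represented by its atom schemas  Q : 'I_k -> {set V}
   (atom i is R_i(X_i); Q i is the set of variables occurring in X_i). *)

Definition atoms_of (V : finType) (k : nat) (Q : 'I_k -> {set V}) (x : V)
  : {set 'I_k} := [set i | x \in Q i].

Definition hierarchical (V : finType) (k : nat) (Q : 'I_k -> {set V}) : Prop :=
  forall x y : V,
    atoms_of Q x \subset atoms_of Q y \/ atoms_of Q y \subset atoms_of Q x \/
    atoms_of Q x :&: atoms_of Q y = finset.set0.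

(* The fresh variables Z_1, ..., Z_k are inr j
   (j : 'I_k, Z_{j+1} = inr j).  The component for the permutation s has,
   at (0-based) position i, the atom  \hat R_{s i}(Z_1, ..., Z_{i+1}, X_{s i}). *)
Definition ext_component (V : finType) (k : nat) (Q : 'I_k -> {set V})
  (s : 'S_k) : 'I_k -> {set (V + 'I_k)%type} :=
  fun i => [set inr j | j : 'I_k & (j <= i)%N] :|: [set inl x | x in Q (s i)].

Definition is_tree (n : nat) (e : rel 'I_n) : Prop :=
  (0 < n)%N /\ (forall a b, e a b = e b a) /\ (forall a, ~~ e a a) /\
  (forall a b, connect e a b) /\
  #|[set p : 'I_n * 'I_n | e p.1 p.2 && (p.1 < p.2)%N]| = n.-1.

Definition tree_decomposition (V : finType) (k : nat) (Q : 'I_k -> {set V})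
  (n : nat) (e : rel 'I_n) (bag : 'I_n -> {set V}) : Prop :=
  is_tree e /\
  (forall i : 'I_k, exists t : 'I_n, Q i \subset bag t) /\
  (forall x : V, forall a b : 'I_n, x \in bag a -> x \in bag b ->
     connect [rel u v | e u v && (x \in bag u) && (x \in bag v)] a b).

Definition frac_edge_cover_number (R : realType) (V : finType) (k : nat)
  (Q : 'I_k -> {set V}) (B : {set V}) : \bar R :=
  ereal_inf [set (\sum_(i < k) w i)%:E | w in
    [set w : 'I_k -> R | (forall i, 0 <= w i) /\
       (forall x, x \in B -> 1 <= \sum_(i < k | x \in Q i :&: B) w i)]]%classic.

Definition fhw (R : realType) (V : finType) (k : nat) (Q : 'I_k -> {set V})
  : \bar R :=
  ereal_inf [set r | exists (n : nat) (e : rel 'I_n) (bag : 'I_n -> {set V}),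
     tree_decomposition Q e bag /\
     r = ereal_sup [set frac_edge_cover_number R Q (bag t) | t in [set: 'I_n]]]%classic.

(* Width of the multivariate extension (union of all components): the maximum
   of the widths of the components. *)
Definition fhw_ext (R : realType) (V : finType) (k : nat) (Q : 'I_k -> {set V})
  : \bar R :=
  ereal_sup [set fhw R (ext_component Q s) | s in [set: 'S_k]]%classic.

(* classical_sets comes first so that the finset names (set0, setIUl, ...)
   shadow its homonyms. *)
From mathcomp Require Import classical_sets reals constructive_ereal ereal.
From mathcomp Require Import all_boot all_order all_algebra all_fingroup.
From mathcomp Require Import zify lra.
Set Implicit Arguments. Unset Strict Implicit. Unset Printing Implicit Defensive.
Import Order.TTheory GRing.Theory Num.Theory.

(* Let x, y witness non-hierarchy: atoms i and j contain x but not y and y but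
   not x respectively, and an atom l contains both.  In the component that
   lists first the m atoms containing both x and y, the fresh variable Z_(m+1)
   occurs exactly in the atoms containing at most one of x, y.  Each pair among
   x, y, Z_(m+1) shares an atom (l, i and j), so by the Helly property of
   subtrees of a tree some bag of any tree decomposition contains all three;
   as no atom contains all three, covering them has weight at least 3/2. *)

Lemma cardsU3 (T : finType) (A B C : {set T}) :
  (#|A :|: B :|: C| + #|A :&: B| + #|A :&: C| + #|B :&: C|
    = #|A| + #|B| + #|C| + #|A :&: B :&: C|)%N.
Proof.
have UI_AB := cardsUI A B; have UI_ABC := cardsUI (A :|: B) C.
have UI_ACBC := cardsUI (A :&: C) (B :&: C).
rewrite setIUl in UI_ABC; rewrite setIACA setIid in UI_ACBC.
lia.
Qed.

Lemma connect_exit_edge (T : finType) (r : rel T) (S : {set T}) a b :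
  connect r a b -> a \in S -> b \notin S ->
  exists u v, [/\ r u v, u \in S & v \notin S].
Proof.
move=> /connectP [p]; elim: p a => [|c p IH] a /=; first by move=> _ -> ->.
move=> /andP [rac pth] Hb aS; case: (boolP (c \in S)) => cS.
  exact: IH pth Hb cS.
by exists a, c.
Qed.

Section InnerEdges.

Variables (n : nat) (e : rel 'I_n).
Implicit Types S T W A B C : {set 'I_n}.

Definition inner_edges (S : {set 'I_n}) : {set 'I_n * 'I_n} :=
  [set p | [&& e p.1 p.2, (p.1 < p.2)%N, p.1 \in S & p.2 \in S]].

Definition connected_in (W : {set 'I_n}) : Prop :=
  {in W &, forall a b, connect [rel u v | e u v && (u \in W) && (v \in W)] a b}.

Lemma inner_edgesS S T : S \subset T -> inner_edges S \subset inner_edges T.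
Proof.
move=> /subsetP ST; apply/subsetP => p; rewrite !inE => /and4P [-> -> pS1 pS2].
by rewrite !ST.
Qed.

Lemma inner_edgesI S T : inner_edges (S :&: T) = inner_edges S :&: inner_edges T.
Proof.
apply/setP => p; rewrite !inE.
case: (e p.1 p.2) (p.1 < p.2)%N => [] [] //=.
by case: (p.1 \in S) (p.1 \in T) (p.2 \in S) (p.2 \in T) => [] [] [] [].
Qed.

Hypothesis e_sym : symmetric e.

Lemma inner_edge_pair u v : e u v -> u != v ->
  exists p, forall S, (p \in inner_edges S) = (u \in S) && (v \in S).
Proof.
move=> euv neq_uv.
case: (ltngtP u v) neq_uv => [lt_uv _|lt_vu _|/val_inj ->]; last by rewrite eqxx.
- by exists (u, v) => S; rewrite inE /= euv lt_uv.
- by exists (v, u) => S; rewrite inE /= e_sym euv lt_vu /= andbC.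
Qed.

Lemma card_inner_edgesD W S s : connected_in W -> s \in S -> S \subset W ->
  (#|W :\: S| <= #|inner_edges W :\: inner_edges S|)%N.
Proof.
(* Grow S along edges leaving it: each new vertex brings a new inner edge. *)
move=> W_conn; move Hd : #|W :\: S| => d.
elim: d S Hd => [//|d IH] S card_WS sS SW.
have [w] : exists w, w \in W :\: S by apply/set0Pn; rewrite -card_gt0 card_WS.
rewrite inE => /andP [wS wW].
have [u [v [/andP [/andP [euv uW] vW] uS vS]]] :=
  connect_exit_edge (W_conn s w (subsetP SW s sS) wW) sS wS.
have [|p mem_p] := inner_edge_pair euv; first by apply: contraNneq vS => <-.
have card_WvS : #|W :\: (v |: S)| = d.
  apply/eqP; rewrite -eqSS -card_WS (cardsD1 v (W :\: S)) !inE vS vW.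
  by rewrite setDDl setUC.
have vS_W : v |: S \subset W by rewrite subUset sub1set vW SW.
have := IH (v |: S) card_WvS (setU1r v sS) vS_W.
move/leq_ltn_trans; apply; apply: proper_card; apply/properP; split.
  by apply: setDS; apply: inner_edgesS; apply: subsetUr.
by exists p; rewrite !in_setD !mem_p ?in_setU1 uW vW uS (negbTE vS) ?eqxx ?orbT.
Qed.

Lemma card_inner_edges_connected A a : connected_in A -> a \in A ->
  (#|A| <= #|inner_edges A|.+1)%N.
Proof.
move=> A_conn aA.
have := card_inner_edgesD A_conn (set11 a); rewrite sub1set => /(_ aA).
rewrite (cardsD1 a A) aA => /leq_trans; apply.
by apply: subset_leq_card; apply: subsetDl.
Qed.

Lemma card_inner_edges_lt S s : is_tree e -> s \in S -> (#|inner_edges S| < #|S|)%N.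
Proof.
move=> [_ [_ [_ [e_conn card_edges]]]] sS.
have T_conn : connected_in [set: 'I_n].
  move=> a b _ _; rewrite (@eq_connect _ _ e) => [|u v /=]; first exact: e_conn.
  by rewrite !inE !andbT.
have edgesT : inner_edges [set: 'I_n] = [set p | e p.1 p.2 && (p.1 < p.2)%N].
  by apply/setP => p; rewrite !inE !andbT.
have := card_inner_edgesD T_conn sS (subsetT S).
rewrite !cardsD setTI (setIidPr (inner_edgesS (subsetT S))) edgesT card_edges.
rewrite cardsT card_ord.
have : (0 < #|S|)%N by rewrite card_gt0; apply/set0Pn; exists s.
have := max_card S; rewrite card_ord.
have := subset_leq_card (inner_edgesS (subsetT S)); rewrite edgesT card_edges.
lia.
Qed.

Lemma tree_helly A B C : is_tree e ->
  connected_in A -> connected_in B -> connected_in C ->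
  (exists t, t \in A :&: B) -> (exists t, t \in A :&: C) -> (exists t, t \in B :&: C) ->
  exists t, t \in A :&: B :&: C.
Proof.
move=> tree A_conn B_conn C_conn [ab ABab] [ac ACac] [bc BCbc].
case: (set_0Vmem (A :&: B :&: C)) => [ABC0|[t ?]]; last by exists t.
have vertices := cardsU3 A B C.
have edges := cardsU3 (inner_edges A) (inner_edges B) (inner_edges C).
rewrite -!inner_edgesI ABC0 in edges; rewrite ABC0 cards0 in vertices.
have no_edges0 : #|inner_edges set0| = 0.
  by apply/eqP; rewrite cards_eq0; apply/eqP/setP => p; rewrite !inE !andbF.
have union_edges : inner_edges A :|: inner_edges B :|: inner_edges C
    \subset inner_edges (A :|: B :|: C).
  rewrite !subUset -andbA; apply/and3P; split; apply: inner_edgesS.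
  - by rewrite -setUA subsetUl.
  - by rewrite setUAC subsetUr.
  - exact: subsetUr.
have /setIP [aA bB] := ABab; have /setIP [_ cC] := ACac.
have abU : ab \in A :|: B :|: C by rewrite !inE aA.
(* In a tree a subtree on s vertices spans s - 1 edges and any s vertices span
   at most s - 1; inclusion-exclusion over vertices and edges then contradicts
   the empty triple intersection. *)
have := card_inner_edges_lt tree abU; have := card_inner_edges_lt tree ABab.
have := card_inner_edges_lt tree ACac; have := card_inner_edges_lt tree BCbc.
have := card_inner_edges_connected A_conn aA.
have := card_inner_edges_connected B_conn bB.
have := card_inner_edges_connected C_conn cC.
have := subset_leq_card union_edges.
lia.
Qed.

End InnerEdges.

Lemma perm_set_prefix k (X : {set 'I_k}) :
  exists s : 'S_k, forall p, (s p \in X) = (p < #|X|)%N.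
Proof.
have /tuple_permP [s Es] : perm_eq (enum X ++ enum (~: X)) (ord_tuple k).
  rewrite val_ord_tuple perm_sym -(perm_filterC (mem X)) enumT /enum_mem.
  rewrite perm_cat2l (@eq_filter _ (predC (mem X)) (mem (~: X))) // => x /=.
  by rewrite in_setC.
have size_k : (size (enum X) + size (enum (~: X)) = k)%N.
  by rewrite -size_cat Es size_tuple.
exists s => p.
have <- : nth p (enum X ++ enum (~: X)) p = s p.
  by rewrite Es -tnth_nth tnth_mktuple tnth_ord_tuple.
rewrite cardE nth_cat; case: ltnP => [lt_p|le_p]; first by rewrite -mem_enum mem_nth.
have : nth p (enum (~: X)) (p - size (enum X)) \in enum (~: X).
  by apply: mem_nth; rewrite ltn_subLR // size_k.
by rewrite mem_enum in_setC => /negbTE.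
Qed.

Lemma bags_connected_in (T : finType) n (e : rel 'I_n) (bag : 'I_n -> {set T}) z :
  (forall x a b, x \in bag a -> x \in bag b ->
     connect [rel u v | e u v && (x \in bag u) && (x \in bag v)] a b) ->
  connected_in e [set t | z \in bag t].
Proof.
move=> bags_conn a b; rewrite !inE => za zb.
rewrite (@eq_connect _ _ [rel u v | e u v && (z \in bag u) && (z \in bag v)]) //.
  exact: bags_conn.
by move=> u v /=; rewrite !inE.
Qed.

Lemma tree_decomposition_triangle_bag (V : finType) k (Q : 'I_k -> {set V}) n (e : rel 'I_n)
    (bag : 'I_n -> {set V}) a b c :
  tree_decomposition Q e bag ->
  (exists i, (a \in Q i) && (b \in Q i)) -> (exists i, (a \in Q i) && (c \in Q i)) ->
  (exists i, (b \in Q i) && (c \in Q i)) ->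
  exists t, [&& a \in bag t, b \in bag t & c \in bag t].
Proof.
move=> [tree [atom_in_bag bags_conn]].
have bag_of_pair x y : (exists i, (x \in Q i) && (y \in Q i)) ->
    exists t, t \in [set t | x \in bag t] :&: [set t | y \in bag t].
  move=> [i /andP [xi yi]]; have [t /subsetP Qi_t] := atom_in_bag i.
  by exists t; rewrite !inE !Qi_t.
move=> /bag_of_pair ab /bag_of_pair ac /bag_of_pair bc.
have [t] := tree_helly tree.2.1 tree (bags_connected_in (z := a) bags_conn)
  (bags_connected_in (z := b) bags_conn) (bags_connected_in (z := c) bags_conn) ab ac bc.
by rewrite !inE -andbA; exists t.
Qed.

Lemma frac_edge_cover_number_ge_3half (R : realType) (V : finType) k
    (Q : 'I_k -> {set V}) (B : {set V}) a b c :
  a \in B -> b \in B -> c \in B ->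
  (forall i, ~~ [&& a \in Q i, b \in Q i & c \in Q i]) ->
  ((3%:R / 2%:R : R)%:E <= frac_edge_cover_number R Q B)%E.
Proof.
move=> aB bB cB no_atom3; apply/ereal_infP => _ [w [w_ge0 w_cover] <-].
rewrite lee_fin.
have cover x : x \in B -> (1 <= \sum_(i < k) (if x \in Q i then w i else 0))%R.
  move=> xB; rewrite -big_mkcond /=.
  suff <- : (\sum_(i < k | x \in Q i :&: B) w i = \sum_(i < k | x \in Q i) w i)%R.
    exact: w_cover.
  by apply: eq_bigl => i; rewrite in_setI xB andbT.
have := cover a aB; have := cover b bB; have := cover c cB.
have : (\sum_(i < k) ((if a \in Q i then w i else 0) + (if b \in Q i then w i else 0)
    + (if c \in Q i then w i else 0)) <= \sum_(i < k) 2 * w i)%R.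
  apply: ler_sum => i _; have := no_atom3 i; have := w_ge0 i.
  by case: (a \in Q i) (b \in Q i) (c \in Q i) => [] [] [] //= *; lra.
rewrite !big_split /= -mulr_sumr.
lra.
Qed.

Lemma fhw_ge_bag (R : realType) (V : finType) k (Q : 'I_k -> {set V}) r :
  (forall n (e : rel 'I_n) (bag : 'I_n -> {set V}), tree_decomposition Q e bag ->
     exists t, (r <= frac_edge_cover_number R Q (bag t))%E) ->
  (r <= fhw R Q)%E.
Proof.
move=> bag_ge; apply/ereal_infP => _ [n [e [bag [td ->]]]].
have [t r_le] := bag_ge n e bag td.
by apply: le_ereal_sup_tmp; exists (frac_edge_cover_number R Q (bag t)) => //; exists t.
Qed.

Lemma fhw_le_fhw_ext (R : realType) (V : finType) k (Q : 'I_k -> {set V}) (s : 'S_k) :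
  (fhw R (ext_component Q s) <= fhw_ext R Q)%E.
Proof. by apply: ereal_sup_ubound; exists s. Qed.

Lemma mem_ext_component_inl (V : finType) k (Q : 'I_k -> {set V}) s p x :
  (inl x \in ext_component Q s p) = (x \in Q (s p)).
Proof.
rewrite in_setU; apply/idP/idP => [/orP [] /imsetP [y yQ E] //|xQ].
  by case: E => ->.
by apply/orP; right; apply/imsetP; exists x.
Qed.

Lemma mem_ext_component_inr (V : finType) k (Q : 'I_k -> {set V}) s p j :
  (inr j \in ext_component Q s p) = (j <= p)%N.
Proof.
rewrite in_setU; apply/idP/idP => [/orP [] /imsetP [i ip E] //|le_jp].
  by case: E => ->; rewrite inE in ip.
by apply/orP; left; apply/imsetP; exists j; rewrite ?inE.
Qed.

Lemma not_hierarchical_witness (V : finType) k (Q : 'I_k -> {set V}) :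
  ~ hierarchical Q -> exists x y (i j l : 'I_k),
    [/\ (x \in Q i) && (y \notin Q i), (y \in Q j) && (x \notin Q j)
      & (x \in Q l) && (y \in Q l)].
Proof.
move=> not_hier.
have : ~~ [forall x, forall y, [|| atoms_of Q x \subset atoms_of Q y,
    atoms_of Q y \subset atoms_of Q x | atoms_of Q x :&: atoms_of Q y == set0]].
  apply/negP => /forallP all_xy; apply: not_hier => x y.
  by have /forallP /(_ y) /or3P [|| /eqP] := all_xy x; auto.
case/forallPn => x /forallPn [y]; rewrite !negb_or.
case/and3P => /subsetPn [i xi yi] /subsetPn [j yj xj] /set0Pn [l].
by rewrite !inE in xi yi yj xj * => xyl; exists x, y, i, j, l; rewrite xi yi yj xj.
Qed.

Theorem mainTheorem8 (R : realType) (V : finType) (k : nat) (Q : 'I_k -> {set V}) :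
  ~ hierarchical Q -> ((3%:R / 2%:R : R)%:E <= fhw_ext R Q)%E.
Proof.
move=> /not_hierarchical_witness [x [y [i [j [l [/andP [xi yi] /andP [yj xj] xyl]]]]]].
pose X := [set p | (x \in Q p) && (y \in Q p)].
have [s s_prefix] := perm_set_prefix X.
have m_lt_k : (#|X| < k)%N.
  apply: (@leq_ltn_trans ((s^-1)%g i)) => //.
  by rewrite leqNgt -s_prefix permKV inE (negbTE yi) andbF.
pose z : 'I_k := Ordinal m_lt_k.
have mem_z p : (inr z \in ext_component Q s p) = ~~ ((x \in Q (s p)) && (y \in Q (s p))).
  by rewrite mem_ext_component_inr leqNgt -s_prefix inE.
apply: le_trans (fhw_le_fhw_ext R Q s); apply: fhw_ge_bag => n e bag td.
have [|||t /and3P [xt yt zt]] :=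
  tree_decomposition_triangle_bag (a := inl x) (b := inl y) (c := inr z) td.
- by exists ((s^-1)%g l); rewrite !mem_ext_component_inl permKV.
- by exists ((s^-1)%g i); rewrite mem_ext_component_inl mem_z permKV xi (negbTE yi).
- by exists ((s^-1)%g j); rewrite mem_ext_component_inl mem_z permKV yj (negbTE xj).
exists t; apply: frac_edge_cover_number_ge_3half xt yt zt _ => p.
by rewrite !mem_ext_component_inl mem_z andbA andbN.
Qed.
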